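(* Let $V$ be a real vector space and $C$ a cone in $V$. Assume $X_1,\dots,X_m,Y_1,\dots,Y_n$ are $C$-antichain-convex subsets of $V$, put $X=X_1+\dots+X_m$ and $Y=Y_1+\dots+Y_n$, and assume $X\cap Y=\emptyset$. (1) If $X_1$ is $C$-upward, then $\operatorname{co}(X)\cap\operatorname{co}(Y)=\emptyset$. (2) If $X_1$ is $C$-downward, then $\operatorname{co}(X)\cap\operatorname{co}(Y)=\emptyset$.
   Context: A cone in $V$ is a subset $C$ with $\lambda C\subseteq C$ for all $\lambda>0$ (possibly empty, need not contain $0$). $S\subseteq V$ is $C$-antichain-convex iff for all $x,y\in S$ and $\lambda\in[0,1]$ with $y-x\notin C\cup(-C)$ one has $\lambda x+(1-\lambda)y\in S$. $S$ is $C$-upward iff $S+C\subseteq S$; $C$-downward iff $S-C\subseteq S$. Sums are Minkowski sums; $\operatorname{co}$ denotes convex hull. *)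

From HB Require Import structures.
From mathcomp Require Import all_boot all_order all_algebra.
From mathcomp Require Import classical_sets reals.
Set Implicit Arguments. Unset Strict Implicit. Unset Printing Implicit Defensive.
Import Order.TTheory GRing.Theory Num.Theory.
Local Open Scope ring_scope.
Local Open Scope classical_set_scope.

Section Defs.
Variables (R : realType) (V : lmodType R).

(* A cone: closed under multiplication by positive scalars (may be empty, need not contain 0). *)
Definition is_cone (C : set V) : Prop :=
  forall (l : R) (x : V), 0 < l -> C x -> C (l *: x).

(* S is C-antichain-convex: for x,y in S with y - x not in C ∪ (-C), the segment [x,y] is in S.
   Note y - x ∈ -C  iff  x - y ∈ C. *)
Definition antichain_convex (C S : set V) : Prop :=
  forall (x y : V) (l : R), S x -> S y -> ~ C (y - x) -> ~ C (x - y) ->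
    0 <= l -> l <= 1 -> S (l *: x + (1 - l) *: y).

Definition upward (C S : set V) : Prop := forall x c, S x -> C c -> S (x + c).
Definition downward (C S : set V) : Prop := forall x c, S x -> C c -> S (x - c).

Definition msum (k : nat) (X : 'I_k -> set V) : set V :=
  [set v | exists f : 'I_k -> V, (forall i, X i (f i)) /\ v = \sum_(i < k) f i].

Definition conv_hull (A : set V) : set V :=
  [set v | exists (k : nat) (l : 'I_k -> R) (a : 'I_k -> V),
     (forall i, 0 <= l i) /\ \sum_(i < k) l i = 1 /\ (forall i, A (a i)) /\
     v = \sum_(i < k) l i *: a i].
End Defs.

From HB Require Import structures.
From mathcomp Require Import all_boot all_order all_algebra.
From mathcomp Require Import boolp classical_sets reals.
Import Order.TTheory GRing.Theory Num.Theory.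
Local Open Scope ring_scope.
Local Open Scope classical_set_scope.
Set Implicit Arguments. Unset Strict Implicit. Unset Printing Implicit Defensive.

(* A convex combination of two points of a C-antichain-convex set A lies in
   A + (C ∪ {0}): if the points are C-incomparable it lies in A, otherwise it
   lies above the smaller one along the segment.  Adding such a set to a
   convex C-upward set therefore keeps it convex (and upward).  When X_1 is
   upward this makes X = X_1 + ... + X_m convex, hence co X = X, and also
   X - Y = X + (-Y_1) + ... + (-Y_n), as the -Y_j are antichain-convex too.
   For z ∈ X ∩ co Y, the convex set {y | z - y ∈ X - Y} contains Y, hence z,
   so 0 ∈ X - Y.  The downward case is the upward one for the cone -C. *)

Section AntichainConvexity.
Variables (R : realType) (V : lmodType R).

Definition convex (W : set V) : Prop :=
  forall x y (l : R), W x -> W y -> 0 <= l -> l <= 1 -> W (l *: x + (1 - l) *: y).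

Lemma convex_reflect (W : set V) z : convex W -> convex [set y | W (z - y)].
Proof.
move=> cW y1 y2 l W1 W2 l0 l1 /=.
have l1l : l + (1 - l) = 1 by rewrite addrC subrK.
suff -> : z - (l *: y1 + (1 - l) *: y2) = l *: (z - y1) + (1 - l) *: (z - y2).
  exact: cW.
by rewrite !scalerBr addrACA -opprD -scalerDl l1l scale1r.
Qed.

Lemma comb_shiftl (x y : V) (l : R) :
  l *: x + (1 - l) *: y = x + (1 - l) *: (y - x).
Proof.
rewrite scalerBr addrA addrAC; congr (_ + _).
by rewrite scalerBl scale1r opprB addrC subrK.
Qed.

Lemma comb_shiftr (x y : V) (l : R) :
  l *: x + (1 - l) *: y = y + l *: (x - y).
Proof.
have l11 : 1 - (1 - l) = l by rewrite opprB addrC subrK.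
by rewrite addrC; have := comb_shiftl y x (1 - l); rewrite l11.
Qed.

Lemma conv_hull_sub (W A : set V) : convex W -> A `<=` W -> conv_hull A `<=` W.
Proof.
move=> cW AW _ [k [l [a [l0 [l1 [Aa ->]]]]]].
elim: k l a l0 l1 Aa => [|k IH] l a l0 l1 Aa.
  by move: l1; rewrite big_ord0 => /esym/eqP; rewrite oner_eq0.
rewrite big_ord_recl in l1; rewrite big_ord_recl.
have sum_l' : \sum_(i < k) l (lift ord0 i) = 1 - l ord0.
  by rewrite -l1 addrC addKr.
have [l0_eq1|l0_neq1] := eqVneq (l ord0) 1.
  have sum_l'0 : \sum_(i < k) l (lift ord0 i) = 0 by rewrite sum_l' l0_eq1 subrr.
  have l'0 := psumr_eq0P (fun i _ => l0 (lift ord0 i)) sum_l'0.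
  rewrite big1 ?addr0 ?l0_eq1 ?scale1r; first exact: AW.
  by move=> i _; rewrite l'0 ?scale0r.
have t0 : 1 - l ord0 != 0 by rewrite subr_eq0 eq_sym.
have t_ge0 : 0 <= 1 - l ord0 by rewrite -sum_l'; apply: sumr_ge0.
have -> : \sum_(i < k) l (lift ord0 i) *: a (lift ord0 i) =
    (1 - l ord0) *:
      \sum_(i < k) (l (lift ord0 i) / (1 - l ord0)) *: a (lift ord0 i).
  by rewrite scaler_sumr; apply: eq_bigr => i _; rewrite scalerA mulrC divfK.
apply: cW; [exact: AW | | exact: l0 | by rewrite -subr_ge0].
apply: IH => //.
- by move=> i; rewrite divr_ge0.
- by rewrite -mulr_suml sum_l' mulfV.
Qed.

Lemma msum_recl k (X : 'I_k.+1 -> set V) :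
  msum X = [set x + y | x in X ord0 & y in msum (fun i => X (lift ord0 i))].
Proof.
apply/seteqP; split => [_ [f [Xf ->]]|_ [x Xx] [_ [f [Xf ->]]] <-].
  rewrite big_ord_recl; exists (f ord0) => //.
  by exists (\sum_i f (lift ord0 i)) => //; exists (fun i => f (lift ord0 i)).
pose g i := if unlift ord0 i is Some j then f j else x.
exists g; split => [i|]; first by rewrite /g; case: unliftP => [j ->|->].
rewrite big_ord_recl /g unlift_none; congr (_ + _).
by apply: eq_bigr => i _; rewrite liftK.
Qed.

Lemma msum_opp k (Y : 'I_k -> set V) v :
  msum (fun j => [set w | Y j (- w)]) v <-> msum Y (- v).
Proof.
split=> -[f [Yf fv]]; exists (fun j => - f j).
  by rewrite fv sumrN.
by split=> [j|]; rewrite /= ?opprK // sumrN -fv opprK.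
Qed.

Section Cone.
Variable C : set V.
Hypothesis coneC : is_cone C.

Lemma cone_scale_ge0 c t : C c -> 0 <= t -> (C `|` [set 0]) (t *: c).
Proof.
move=> Cc; rewrite le_eqVlt => /predU1P[<-|t0]; first by right; rewrite scale0r.
by left; apply: coneC.
Qed.

Lemma antichain_convex_comb (A : set V) a a' l :
  antichain_convex C A -> A a -> A a' -> 0 <= l -> l <= 1 ->
  exists c, (C `|` [set 0]) c /\ A (l *: a + (1 - l) *: a' - c).
Proof.
move=> acA Aa Aa' l0 l1.
have l1' : 0 <= 1 - l by rewrite subr_ge0.
have [Ca'a|nCa'a] := pselect (C (a' - a)).
  exists ((1 - l) *: (a' - a)); rewrite comb_shiftl addrK.
  by split=> //; apply: cone_scale_ge0.
have [Caa'|nCaa'] := pselect (C (a - a')).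
  exists (l *: (a - a')); rewrite comb_shiftr addrK.
  by split=> //; apply: cone_scale_ge0.
by exists 0; rewrite subr0; split; [right | apply: acA].
Qed.

Lemma upward_add_cone0 (S : set V) s c :
  upward C S -> S s -> (C `|` [set 0]) c -> S (s + c).
Proof. by move=> upS Ss [Cc|->]; [exact: upS | rewrite addr0]. Qed.

Lemma upward_add_sum (S : set V) k (e : 'I_k -> V) s :
  upward C S -> S s -> (forall i, (C `|` [set 0]) (e i)) -> S (s + \sum_i e i).
Proof.
move=> upS Ss Ce; apply: (big_rec (fun x => S (s + x))); first by rewrite addr0.
by move=> i x _ Sx; rewrite addrCA addrC; apply: upward_add_cone0.
Qed.

Lemma upward_antichain_convex (S : set V) :
  upward C S -> antichain_convex C S -> convex S.
Proof.
move=> upS acS x y l Sx Sy l0 l1.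
have [c [Cc Sc]] := antichain_convex_comb acS Sx Sy l0 l1.
by rewrite -(subrK c (l *: x + (1 - l) *: y)); apply: upward_add_cone0.
Qed.

Lemma msum_comb k (A : 'I_k -> set V) a a' l :
  (forall i, antichain_convex C (A i)) -> msum A a -> msum A a' ->
  0 <= l -> l <= 1 ->
  exists e : 'I_k -> V, (forall i, (C `|` [set 0]) (e i)) /\
    msum A (l *: a + (1 - l) *: a' - \sum_i e i).
Proof.
move=> acA [f [Af ->]] [f' [Af' ->]] l0 l1.
have [e Ae] :=
  choice (fun i => antichain_convex_comb (acA i) (Af i) (Af' i) l0 l1).
exists e; split=> [i|]; first by have [] := Ae i.
exists (fun i => l *: f i + (1 - l) *: f' i - e i).
split=> [i|]; first by have [] := Ae i.
by rewrite !scaler_sumr -big_split -sumrB.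
Qed.

Lemma upward_addr (S T : set V) :
  upward C S -> upward C [set s + t | s in S & t in T].
Proof.
move=> upS _ c [s Ss [t Tt <-]] Cc.
by exists (s + c); [exact: upS | exists t => //; rewrite addrAC].
Qed.

Lemma convex_upward_add_msum (S : set V) k (A : 'I_k -> set V) :
  convex S -> upward C S -> (forall i, antichain_convex C (A i)) ->
  convex [set s + a | s in S & a in msum A].
Proof.
move=> cS upS acA _ _ l [s Ss [a Aa <-]] [s' Ss' [a' Aa' <-]] l0 l1.
have [e [Ce Ae]] := msum_comb acA Aa Aa' l0 l1.
exists (l *: s + (1 - l) *: s' + \sum_i e i).
  by apply: upward_add_sum => //; apply: cS.
exists (l *: a + (1 - l) *: a' - \sum_i e i) => //.
by rewrite addrACA subrr addr0 !scalerDr addrACA.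
Qed.

Lemma upward_msum k (X : 'I_k.+1 -> set V) :
  upward C (X ord0) -> upward C (msum X).
Proof. by rewrite msum_recl; apply: upward_addr. Qed.

Lemma convex_msum k (X : 'I_k.+1 -> set V) :
  (forall i, antichain_convex C (X i)) -> upward C (X ord0) -> convex (msum X).
Proof.
move=> acX upX; rewrite msum_recl.
by apply: convex_upward_add_msum => //; apply: upward_antichain_convex.
Qed.

Lemma antichain_convex_opp (S : set V) :
  antichain_convex C S -> antichain_convex C [set v | S (- v)].
Proof.
move=> acS x y l Sx Sy nCyx nCxy l0 l1 /=.
by rewrite opprD -!scalerN; apply: acS; rewrite // opprK addrC.
Qed.

Lemma conv_hull_msum_disjoint_upward m n
    (X : 'I_m.+1 -> set V) (Y : 'I_n -> set V) :
  (forall i, antichain_convex C (X i)) -> (forall j, antichain_convex C (Y j)) ->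
  upward C (X ord0) -> msum X `&` msum Y = set0 ->
  conv_hull (msum X) `&` conv_hull (msum Y) = set0.
Proof.
move=> acX acY upX XY0.
set D := [set x + w | x in msum X & w in msum (fun j => [set w | Y j (- w)])].
have convX := convex_msum acX upX.
have convD : convex D.
  apply: convex_upward_add_msum => // [|j]; first exact: upward_msum.
  exact: antichain_convex_opp.
rewrite -subset0 => z [/(conv_hull_sub convX (@subset_refl _ _)) Xz Yz].
have /= : [set y | D (z - y)] z.
  apply: conv_hull_sub Yz; first exact: convex_reflect.
  by move=> y Yy; exists z => //; exists (- y); rewrite // msum_opp opprK.
rewrite subrr => -[x Xx [w Yw /eqP]]; rewrite addr_eq0 => /eqP xw.
have : (msum X `&` msum Y) x by split=> //; rewrite xw -msum_opp.
by rewrite XY0.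
Qed.

End Cone.

Lemma is_cone_opp (C : set V) : is_cone C -> is_cone [set v | C (- v)].
Proof. by move=> coneC l x l0 /= Cx; rewrite -scalerN; apply: coneC. Qed.

Lemma antichain_convex_opp_cone (C S : set V) :
  antichain_convex C S -> antichain_convex [set v | C (- v)] S.
Proof.
move=> acS x y l Sx Sy nCyx nCxy; apply: acS => // [Cyx|Cxy].
- by apply: nCxy; rewrite /= opprB.
- by apply: nCyx; rewrite /= opprB.
Qed.

Lemma downward_upward_opp (C S : set V) :
  downward C S -> upward [set v | C (- v)] S.
Proof. by move=> downS x c Sx Cc; rewrite -[c]opprK; apply: downS. Qed.

End AntichainConvexity.

Theorem corollary1 (R : realType) (V : lmodType R) (C : set V) (m n : nat)
  (X : 'I_m.+1 -> set V) (Y : 'I_n.+1 -> set V) :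
  is_cone C ->
  (forall i, antichain_convex C (X i)) ->
  (forall j, antichain_convex C (Y j)) ->
  msum X `&` msum Y = set0 ->
  (upward C (X ord0) -> conv_hull (msum X) `&` conv_hull (msum Y) = set0) /\
  (downward C (X ord0) -> conv_hull (msum X) `&` conv_hull (msum Y) = set0).
Proof.
move=> coneC acX acY XY0; split=> [upX|downX].
  exact: (conv_hull_msum_disjoint_upward coneC acX acY upX XY0).
apply: (conv_hull_msum_disjoint_upward (is_cone_opp coneC)) XY0.
- by move=> i; apply: antichain_convex_opp_cone.
- by move=> j; apply: antichain_convex_opp_cone.
- exact: downward_upward_opp.
Qed.
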